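(* Let the joint distribution of observable random variables $(Y,D)$ on $\mathbb R\times\{0,1\}$ be given, and let $\nu$ be a probability distribution on $\mathbb R^2$. For a Borel set $A\subseteq\mathbb R^2$ define $U_{A,1}=\{y\in\mathbb R: ((-\infty,y]\times\{y\})\cap A\neq\varnothing\}$, $U_{A,0}=\{y\in\mathbb R:(\{y\}\times(-\infty,y])\cap A\neq\varnothing\}$, $L_{A,1}=\{y\in\mathbb R:(-\infty,y]\times\{y\}\subseteq A\}$, $L_{A,0}=\{y\in\mathbb R:\{y\}\times(-\infty,y]\subseteq A\}$. Then $\nu$ satisfies, for every Borel $A\subseteq\mathbb R^2$, $$\mathbb P(Y\in L_{A,0},D=0)+\mathbb P(Y\in L_{A,1},D=1)\le \nu(A)\le \mathbb P(Y\in U_{A,0},D=0)+\mathbb P(Y\in U_{A,1},D=1)$$ if and only if there exist, on some probability space, random variables $(\tilde Y,\tilde D,Y_0,Y_1)$ with $(\tilde Y,\tilde D)$ distributed as $(Y,D)$ and $(Y_0,Y_1)$ distributed as $\nu$ such that $\tilde Y=Y_1\tilde D+Y_0(1-\tilde D)$ and almost surely $Y_1>Y_0\Rightarrow \tilde D=1$ and $Y_1<Y_0\Rightarrow \tilde D=0$.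
   Context: Roy model: $Y$ is a real observed outcome, $D\in\{0,1\}$ an observed sector indicator, $(Y_0,Y_1)$ real potential outcomes (ordered as $(Y_0,Y_1)$ in $\mathbb R^2$), with $Y=Y_1D+Y_0(1-D)$ and the selection rule $Y_1>Y_0\Rightarrow D=1$, $Y_1<Y_0\Rightarrow D=0$ (unspecified when $Y_1=Y_0$). *)

From HB Require Import structures.
From mathcomp Require Import all_boot all_order all_algebra.
From mathcomp Require Import all_classical all_reals all_analysis.
Set Implicit Arguments. Unset Strict Implicit. Unset Printing Implicit Defensive.
Import Order.TTheory GRing.Theory Num.Theory.
Local Open Scope classical_set_scope.
Local Open Scope ring_scope.

(* Roy model sets.  A point of R^2 is (y0, y1). *)
Definition U1 {R : realType} (A : set (R * R)) : set R :=
  [set y | exists x, x <= y /\ A (x, y)].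
Definition U0 {R : realType} (A : set (R * R)) : set R :=
  [set y | exists x, x <= y /\ A (y, x)].
Definition L1 {R : realType} (A : set (R * R)) : set R :=
  [set y | forall x, x <= y -> A (x, y)].
Definition L0 {R : realType} (A : set (R * R)) : set R :=
  [set y | forall x, x <= y -> A (y, x)].

Definition outer_meas d (T : measurableType d) (R : realType)
  (mu : set T -> \bar R) (S : set T) : \bar R :=
  ereal_inf [set mu B | B in [set B | measurable B /\ S `<=` B]].
Definition inner_meas d (T : measurableType d) (R : realType)
  (mu : set T -> \bar R) (S : set T) : \bar R :=
  ereal_sup [set mu B | B in [set B | measurable B /\ B `<=` S]].

Definition YD_event {R : realType} (S : set R) (b : bool) : set (R * bool) :=
  [set p | S p.1 /\ p.2 = b].

From HB Require Import structures.
From mathcomp Require Import all_boot all_order all_algebra.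
From mathcomp Require Import all_classical all_reals all_analysis.
From mathcomp Require Import measurable_realfun.
Set Implicit Arguments. Unset Strict Implicit. Unset Printing Implicit Defensive.
Import Order.TTheory GRing.Theory Num.Theory.
Local Open Scope classical_set_scope.
Local Open Scope ring_scope.
Local Open Scope ereal_scope.

(* Outside a null set the selection rule makes Y the larger of Y0 and Y1.  For
   the sets A = {max (y0, y1) \in B} all four sets L_{A,b}, U_{A,b} equal B, so
   the bounds say that the law of max (Y0, Y1) under nu is the law of Y; for
   A = {y0 < y1, y1 \in B} (resp. {y1 < y0, y0 \in B}) the upper bound says that
   the off-diagonal mass of nu, projected to its larger coordinate, is dominated
   by P (Y \in _, D = 1) (resp. D = 0).  The coupling therefore puts the mass of
   nu above the diagonal on D = 1, below it on D = 0, and splits the diagonal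
   mass between D = 1 and D = 0 according to the two differences, which add up
   to the diagonal part of nu.  Conversely, given a coupling,
   {(Y,D) \in L-events} <= {(Y0,Y1) \in A} <= {(Y,D) \in U-events} up to the
   null set. *)

Lemma measurableT_preimage d1 d2 (T1 : measurableType d1) (T2 : measurableType d2)
    (f : T1 -> T2) (B : set T2) :
  measurable_fun setT f -> measurable B -> measurable (f @^-1` B).
Proof. by move=> mf mB; rewrite -[_ @^-1` _]setTI; exact: mf. Qed.

(* [pushforward m f] is a measure only given a proof that [f] is measurable,
   which canonical-structure inference cannot supply; bundling the proof, as
   [mrestr] does, makes the measure instance canonical. *)
Definition image_measure d1 d2 (T1 : measurableType d1) (T2 : measurableType d2)
  (R : realType) (m : set T1 -> \bar R) (f : T1 -> T2) & measurable_fun setT f :=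
  pushforward m f.
Arguments image_measure {d1 d2 T1 T2 R} m {f}.

Section image_measure.
Context d1 d2 (T1 : measurableType d1) (T2 : measurableType d2) (R : realType).
Variables (f : T1 -> T2) (mf : measurable_fun setT f).

Section measure.
Variable m : {measure set T1 -> \bar R}.
Local Notation image := (image_measure m mf).

Let image0 : image set0 = 0.
Proof. by rewrite /image_measure /pushforward preimage_set0 measure0. Qed.

Let image_ge0 A : 0 <= image A.
Proof. exact: measure_ge0. Qed.

Let image_sigma_additive : semi_sigma_additive image.
Proof.
move=> F mF tF mUF; rewrite /image_measure /pushforward preimage_bigcup.
apply: measure_semi_sigma_additive.
- by move=> n; exact: measurableT_preimage.
- apply/trivIsetP => i j _ _ ij; rewrite -preimage_setI.
  by move/trivIsetP : tF => /(_ _ _ _ _ ij) ->.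
- by rewrite -preimage_bigcup; exact: measurableT_preimage.
Qed.

HB.instance Definition _ := isMeasure.Build _ _ _ image
  image0 image_ge0 image_sigma_additive.
End measure.

Section finite_measure.
Variable m : {finite_measure set T1 -> \bar R}.

Let image_fin_num : fin_num_fun (image_measure m mf).
Proof. by move=> A mA; apply: fin_num_measure; exact: measurableT_preimage. Qed.

HB.instance Definition _ := Measure_isFinite.Build _ _ _ (image_measure m mf)
  image_fin_num.
End finite_measure.
End image_measure.

(* On a non-measurable set [mu B - a B] may be negative: [0] is returned there. *)
Definition mdiff d (T : measurableType d) (R : realType) (mu a : set T -> \bar R)
    & (forall B, measurable B -> a B <= mu B) : set T -> \bar R :=
  fun B => if `[< measurable B >] then mu B - a B else 0.
Arguments mdiff {d T R mu a}.

Section measure_difference.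
Context d (T : measurableType d) (R : realType).
Variables (mu : {measure set T -> \bar R}) (a : {finite_measure set T -> \bar R}).
Hypothesis a_le_mu : forall B, measurable B -> a B <= mu B.
Local Notation q := (mdiff a_le_mu).

Lemma mdiffE B : measurable B -> q B = mu B - a B.
Proof. by move=> mB; rewrite /mdiff asboolT. Qed.

Let mdiff0 : q set0 = 0.
Proof. by rewrite mdiffE// !measure0 subee. Qed.

Let mdiff_ge0 B : 0 <= q B.
Proof.
rewrite /mdiff; case: asboolP => // mB.
by rewrite sube_ge0 ?a_le_mu // fin_num_measure.
Qed.

Let mdiff_sigma_additive : semi_sigma_additive q.
Proof.
move=> F mF tF mUF; rewrite mdiffE//.
have -> : (fun n => \sum_(0 <= i < n) q (F i)) =
    (fun n => \sum_(0 <= i < n) mu (F i) - \sum_(0 <= i < n) a (F i)).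
  apply/funext => n; rewrite -sumeN; last first.
    by move=> i j _ _; apply: fin_num_adde_defl; exact: fin_num_measure.
  by rewrite -big_split; apply: eq_bigr => i _; rewrite mdiffE.
apply: cvgeB; first by rewrite fin_num_adde_defl// fin_numN fin_num_measure.
- exact: measure_semi_sigma_additive.
- exact: measure_semi_sigma_additive.
Qed.

HB.instance Definition _ := isMeasure.Build _ _ _ q
  mdiff0 mdiff_ge0 mdiff_sigma_additive.
End measure_difference.

Section inner_outer_measure.
Context d (T : measurableType d) (R : realType).

Section measure.
Variable mu : {measure set T -> \bar R}.

Lemma outer_meas_le S C : measurable C -> S `<=` C -> outer_meas mu S <= mu C.
Proof. by move=> mC SC; apply: ereal_inf_lbound; exists C. Qed.

Lemma inner_meas_ge S B : measurable B -> B `<=` S -> mu B <= inner_meas mu S.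
Proof. by move=> mB BS; apply: ereal_sup_ubound; exists B. Qed.

Lemma outer_meas_id S : measurable S -> outer_meas mu S = mu S.
Proof.
move=> mS; apply/le_anti/andP; split; first exact: outer_meas_le.
by apply: le_ereal_inf_tmp => _ [C [mC SC] <-]; rewrite le_measure ?inE.
Qed.

Lemma inner_meas_id S : measurable S -> inner_meas mu S = mu S.
Proof.
move=> mS; apply/le_anti/andP; split; last exact: inner_meas_ge.
by apply: ge_ereal_sup => _ [B [mB BS] <-]; rewrite le_measure ?inE.
Qed.
End measure.

Section finite_measure.
Variable mu : {finite_measure set T -> \bar R}.

Lemma outer_meas_fin_num S : outer_meas mu S \is a fin_num.
Proof.
rewrite ge0_fin_numE; last by apply: le_ereal_inf_tmp => _ [C _ <-].
apply: (le_lt_trans (outer_meas_le _ measurableT (subsetT S))).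
by rewrite ltey_eq fin_num_measure.
Qed.

Lemma inner_meas_fin_num S : inner_meas mu S \is a fin_num.
Proof.
rewrite ge0_fin_numE; last by rewrite -(measure0 mu); exact: inner_meas_ge.
apply: (le_lt_trans (_ : _ <= mu setT)); last by rewrite ltey_eq fin_num_measure.
by apply: ge_ereal_sup => _ [B [mB _] <-]; rewrite le_measure ?inE.
Qed.

Lemma inner_measD_le S0 S1 c :
  (forall B0 B1, measurable B0 -> measurable B1 -> B0 `<=` S0 -> B1 `<=` S1 ->
     mu B0 + mu B1 <= c) ->
  inner_meas mu S0 + inner_meas mu S1 <= c.
Proof.
move=> le_c; rewrite -leeBrDr ?inner_meas_fin_num//.
apply: ge_ereal_sup => _ [B0 [mB0 B0S0] <-].
rewrite leeBrDr ?inner_meas_fin_num// addeC -leeBrDr ?fin_num_measure//.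
apply: ge_ereal_sup => _ [B1 [mB1 B1S1] <-].
by rewrite leeBrDr ?fin_num_measure// addeC; exact: le_c.
Qed.

Lemma outer_measD_ge S0 S1 c :
  (forall C0 C1, measurable C0 -> measurable C1 -> S0 `<=` C0 -> S1 `<=` C1 ->
     c <= mu C0 + mu C1) ->
  c <= outer_meas mu S0 + outer_meas mu S1.
Proof.
move=> ge_c; rewrite -leeBlDr ?outer_meas_fin_num//.
apply: le_ereal_inf_tmp => _ [C0 [mC0 S0C0] <-].
rewrite leeBlDr ?outer_meas_fin_num// addeC -leeBlDr ?fin_num_measure//.
apply: le_ereal_inf_tmp => _ [C1 [mC1 S1C1] <-].
by rewrite leeBlDr ?fin_num_measure// addeC; exact: ge_c.
Qed.
End finite_measure.
End inner_outer_measure.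

Lemma le_measure_nullU d (T : measurableType d) (R : realType)
    (mu : {measure set T -> \bar R}) (A B N : set T) :
  measurable A -> measurable B -> measurable N -> mu N = 0 ->
  A `<=` B `|` N -> mu A <= mu B.
Proof.
move=> mA mB mN N0 ABN; rewrite -(measureU0 mB mN N0).
by apply: le_measure; rewrite ?inE//; exact: measurableU.
Qed.

Definition roy_selection {R : realType} (y0 y1 : R) (b : bool) : Prop :=
  ((y0 < y1)%R -> b = true) /\ ((y1 < y0)%R -> b = false).

Definition sector1 {R : realType} : set (R * R) := [set p | (p.1 < p.2)%R].
Definition sector0 {R : realType} : set (R * R) := [set p | (p.2 < p.1)%R].
Definition ties {R : realType} : set (R * R) := [set p | p.1 = p.2].
Definition maxpair {R : realType} (p : R * R) : R := Num.max p.1 p.2.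

Section roy_sets.
Variable R : realType.
Implicit Types (A : set (R * R)) (B : set R).

Lemma roy_selectionP (y0 y1 : R) b :
  roy_selection y0 y1 b <-> (if b then y0 <= y1 else y1 <= y0)%R.
Proof.
case: b.
- split=> [[_ sel0]|le]; first by rewrite leNgt; apply/negP => /sel0.
  by split=> // /(le_lt_trans le); rewrite ltxx.
- split=> [[sel1 _]|le]; first by rewrite leNgt; apply/negP => /sel1.
  by split=> // /(le_lt_trans le); rewrite ltxx.
Qed.

Lemma roy_selection_L A (y0 y1 : R) b : roy_selection y0 y1 b ->
  (YD_event (L0 A) false `|` YD_event (L1 A) true) (if b then y1 else y0, b) ->
  A (y0, y1).
Proof. by move/roy_selectionP; case: b => le [] [L //= _]; exact: L. Qed.

Lemma roy_selection_U A (y0 y1 : R) b : roy_selection y0 y1 b -> A (y0, y1) ->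
  (YD_event (U0 A) false `|` YD_event (U1 A) true) (if b then y1 else y0, b).
Proof.
by move/roy_selectionP; case: b => le Ay; [right|left]; split=> //;
  [exists y0|exists y1].
Qed.

Lemma L0_maxpair B : L0 (maxpair @^-1` B) = B.
Proof.
apply/seteqP; split=> y; first by move/(_ y (lexx y)); rewrite /= /maxpair maxxx.
by move=> By x xy; rewrite /= /maxpair max_l.
Qed.

Lemma L1_maxpair B : L1 (maxpair @^-1` B) = B.
Proof.
apply/seteqP; split=> y; first by move/(_ y (lexx y)); rewrite /= /maxpair maxxx.
by move=> By x xy; rewrite /= /maxpair max_r.
Qed.

Lemma U0_maxpair B : U0 (maxpair @^-1` B) = B.
Proof.
apply/seteqP; split=> y; last by move=> By; exists y; rewrite /= /maxpair maxxx.
by move=> [x [xy]]; rewrite /= /maxpair max_l.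
Qed.

Lemma U1_maxpair B : U1 (maxpair @^-1` B) = B.
Proof.
apply/seteqP; split=> y; last by move=> By; exists y; rewrite /= /maxpair maxxx.
by move=> [x [xy]]; rewrite /= /maxpair max_r.
Qed.

Lemma U0_sector1 A : A `<=` sector1 -> U0 A = set0.
Proof.
move=> A1; apply/seteqP; split=> // y [x [xy /A1]].
by rewrite /sector1 /= ltNge xy.
Qed.

Lemma U1_sector0 A : A `<=` sector0 -> U1 A = set0.
Proof.
move=> A0; apply/seteqP; split=> // y [x [xy /A0]].
by rewrite /sector0 /= ltNge xy.
Qed.

Lemma U1_snd B D : U1 (snd @^-1` B `&` D) `<=` B.
Proof. by move=> y [x [_ []]]. Qed.

Lemma U0_fst B D : U0 (fst @^-1` B `&` D) `<=` B.
Proof. by move=> y [x [_ []]]. Qed.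

Lemma measurable_sector1 : measurable (@sector1 R).
Proof.
by apply: measurableT_preimage => //; exact: measurable_fun_ltr.
Qed.

Lemma measurable_sector0 : measurable (@sector0 R).
Proof.
by apply: measurableT_preimage => //; exact: measurable_fun_ltr.
Qed.

Lemma measurable_ties : measurable (@ties R).
Proof.
rewrite (_ : ties = (fun p => p.1 == p.2) @^-1` [set true]).
  by apply: measurableT_preimage => //; exact: measurable_fun_eqr.
by apply/seteqP; split=> p /eqP.
Qed.

Lemma measurable_maxpair : measurable_fun setT (@maxpair R).
Proof. exact: measurable_maxr. Qed.

Lemma measure_sectors (mu : {measure set (R * R) -> \bar R}) E : measurable E ->
  mu E = mu (E `&` sector1) + mu (E `&` sector0) + mu (E `&` ties).
Proof.
move=> mE; have mEI S : measurable S -> measurable (E `&` S) by exact: measurableI.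
have m1 := mEI _ measurable_sector1; have m0 := mEI _ measurable_sector0.
have mt := mEI _ measurable_ties.
rewrite -measureU//; last first.
  by apply/seteqP; split=> // p [[_ lt] [_ gt]]; move: (lt_trans lt gt); rewrite ltxx.
rewrite -measureU//; [|exact: measurableU|]; last first.
  apply/seteqP; split=> // -[x y] [[[_ +]|[_ +]] [_ exy]];
    by move: exy; rewrite /ties /sector1 /sector0 /= => ->; rewrite ltxx.
congr (mu _); rewrite -!setIUr; apply/esym/setIidl => -[x y] _.
by case: (ltgtP x y); [left; left|left; right|right].
Qed.
End roy_sets.
Arguments measurable_sector1 {R}.
Arguments measurable_sector0 {R}.
Arguments measurable_ties {R}.
Arguments measurable_maxpair {R}.

Definition roy_bounds {R : realType} (PYD : probability (R * bool)%type R)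
    (nu : probability (R * R)%type R) : Prop :=
  forall A : set (R * R), measurable A ->
     inner_meas PYD (YD_event (L0 A) false) + inner_meas PYD (YD_event (L1 A) true)
       <= nu A /\
     nu A <= outer_meas PYD (YD_event (U0 A) false)
             + outer_meas PYD (YD_event (U1 A) true).

Definition roy_coupling {R : realType} (PYD : probability (R * bool)%type R)
    (nu : probability (R * R)%type R) : Prop :=
  exists (d : measure_display) (T : measurableType d) (P : probability T R)
         (Yt : T -> R) (Dt : T -> bool) (Y0 Y1 : T -> R),
    [/\ measurable_fun setT (fun t => (Yt t, Dt t)) /\
        measurable_fun setT (fun t => (Y0 t, Y1 t)),
        (forall B : set (R * bool), measurable B ->
           P ((fun t => (Yt t, Dt t)) @^-1` B) = PYD B),
        (forall B : set (R * R), measurable B ->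
           P ((fun t => (Y0 t, Y1 t)) @^-1` B) = nu B),
        (forall t, Yt t = (if Dt t then Y1 t else Y0 t)%R) &
        {ae P, forall t, roy_selection (Y0 t) (Y1 t) (Dt t)}].

Section coupling_of_bounds.
Variables (R : realType) (PYD : probability (R * bool)%type R)
  (nu : probability (R * R)%type R).

Lemma measurable_Dslice b : measurable (@snd R bool @^-1` [set b]).
Proof. by apply: measurableT_preimage. Qed.

Lemma measurable_YD_event (B : set R) b : measurable B -> measurable (YD_event B b).
Proof.
move=> mB; apply: measurableI (measurable_Dslice b).
exact: measurableT_preimage.
Qed.

Definition Yslice b := image_measure (mrestr PYD (measurable_Dslice b))
  (@measurable_fst _ _ R bool).
Definition nu1 := image_measure (mrestr nu measurable_sector1) measurable_snd.
Definition nu0 := image_measure (mrestr nu measurable_sector0) measurable_fst.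
Definition nu_tie := image_measure (mrestr nu measurable_ties) measurable_fst.

Lemma YsliceE b B : Yslice b B = PYD (YD_event B b).
Proof. by []. Qed.

Lemma Yslice_split B : measurable B ->
  PYD B = Yslice true [set y | B (y, true)] + Yslice false [set y | B (y, false)].
Proof.
move=> mB; have mBb b : measurable [set y | B (y, b)].
  by apply: measurableT_preimage => //; exact: measurable_fun_pair.
rewrite !YsliceE -measureU; [|exact: measurable_YD_event..|]; last first.
  by apply/seteqP; split=> // -[y b] [[_ b1] [_]]; rewrite b1.
congr (PYD _); apply/seteqP; split=> [[y [|]] Bp|[y b] [[Bp bE]|[Bp bE]]].
- by left.
- by right.
- by move: bE Bp => /= ->.
- by move: bE Bp => /= ->.
Qed.

Lemma nu_maxpair B : measurable B -> nu (maxpair @^-1` B) = nu1 B + nu0 B + nu_tie B.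
Proof.
move=> mB; rewrite measure_sectors; last first.
  exact: measurableT_preimage measurable_maxpair mB.
congr (_ + _ + _); congr (nu _); apply/seteqP; split=> -[x y] [Bm xy]; split=> //;
  move: Bm xy; rewrite /maxpair /sector1 /sector0 /ties /=.
- by move=> + /ltW xy; rewrite max_r.
- by move=> + /ltW xy; rewrite max_r.
- by move=> + /ltW yx; rewrite max_l.
- by move=> + /ltW yx; rewrite max_l.
- by move=> + exy; rewrite exy maxxx.
- by move=> + exy; rewrite exy maxxx.
Qed.

Hypothesis bounds : roy_bounds PYD nu.

Lemma nu1_le_Yslice B : measurable B -> nu1 B <= Yslice true B.
Proof.
move=> mB; have mA : measurable (snd @^-1` B `&` sector1).
  by apply: measurableI measurable_sector1; exact: measurableT_preimage.
have [_] := bounds mA; rewrite U0_sector1; last by move=> ? [].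
move/le_trans; apply; rewrite YsliceE -[X in _ <= X]add0e; apply: leeD.
  by rewrite -(measure0 PYD); apply: outer_meas_le => // p [].
apply: outer_meas_le; first exact: measurable_YD_event.
by move=> p [/U1_snd Bp pE].
Qed.

Lemma nu0_le_Yslice B : measurable B -> nu0 B <= Yslice false B.
Proof.
move=> mB; have mA : measurable (fst @^-1` B `&` sector0).
  by apply: measurableI measurable_sector0; exact: measurableT_preimage.
have [_] := bounds mA; rewrite U1_sector0; last by move=> ? [].
move/le_trans; apply; rewrite YsliceE -[X in _ <= X]adde0; apply: leeD.
  apply: outer_meas_le; first exact: measurable_YD_event.
  by move=> p [/U0_fst Bp pE].
by rewrite -(measure0 PYD); apply: outer_meas_le => // p [].
Qed.

Lemma Yslice_sum B : measurable B ->
  Yslice false B + Yslice true B = nu1 B + nu0 B + nu_tie B.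
Proof.
move=> mB; rewrite -nu_maxpair//.
have [] := bounds (measurableT_preimage measurable_maxpair mB).
rewrite L0_maxpair L1_maxpair U0_maxpair U1_maxpair.
have mYD b : measurable (YD_event B b) by exact: measurable_YD_event.
by rewrite !inner_meas_id ?outer_meas_id// => lo hi; apply/eqP; rewrite eq_le lo hi.
Qed.

Definition tie_share1 := mdiff nu1_le_Yslice.
Definition tie_share0 := mdiff nu0_le_Yslice.

Lemma tie_share_sum B : measurable B -> tie_share1 B + tie_share0 B = nu_tie B.
Proof.
move=> mB; rewrite /tie_share1 /tie_share0 !mdiffE// addeACA.
rewrite -oppeD ?fin_num_adde_defl ?fin_num_measure//.
rewrite [Yslice true B + _]addeC Yslice_sum// [_ + nu_tie B]addeC addeK//.
by rewrite fin_numD !fin_num_measure.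
Qed.

Definition label (b : bool) (p : R * R) : (R * R) * bool := (p, b).
Definition diag_label (b : bool) (y : R) : (R * R) * bool := ((y, y), b).

Lemma measurable_label b : measurable_fun setT (label b).
Proof. exact: measurable_fun_pair. Qed.

Lemma measurable_diag_label b : measurable_fun setT (diag_label b).
Proof. by apply: measurable_fun_pair => //; exact: measurable_fun_pair. Qed.

Definition coupling := measure_add
  (measure_add (image_measure (mrestr nu measurable_sector1) (measurable_label true))
               (image_measure (mrestr nu measurable_sector0) (measurable_label false)))
  (measure_add (image_measure tie_share1 (measurable_diag_label true))
               (image_measure tie_share0 (measurable_diag_label false))).

Lemma couplingE E : coupling E =
  nu (label true @^-1` E `&` sector1) + nu (label false @^-1` E `&` sector0) +
  (tie_share1 (diag_label true @^-1` E) + tie_share0 (diag_label false @^-1` E)).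
Proof.
by rewrite /coupling measure_addE; congr (_ + _); exact: measure_addE.
Qed.

Lemma coupling_Y01 E : measurable E ->
  coupling ((fun t => (t.1.1, t.1.2)) @^-1` E) = nu E.
Proof.
move=> mE; have mEdiag : measurable [set y : R | E (y, y)].
  by apply: measurableT_preimage => //; exact: measurable_fun_pair.
have labelE b : label b @^-1` ((fun t => (t.1.1, t.1.2)) @^-1` E) = E.
  by apply/seteqP; split=> -[x y].
rewrite couplingE !labelE (tie_share_sum mEdiag) [in RHS](measure_sectors nu mE).
congr (_ + _); congr (nu _); apply/seteqP; split=> -[x y] [Exx xy];
  by move: xy Exx; rewrite /ties /= => xy; rewrite ?xy.
Qed.

Lemma coupling_setT : coupling setT = 1.
Proof.
by rewrite -(preimage_setT (fun t => (t.1.1, t.1.2))) coupling_Y01 ?probability_setT.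
Qed.

HB.instance Definition _ := Measure.on coupling.
HB.instance Definition _ := Measure_isProbability.Build _ _ _ coupling coupling_setT.

Lemma coupling_YD B : measurable B ->
  coupling ((fun t => (if t.2 then t.1.2 else t.1.1, t.2)) @^-1` B) = PYD B.
Proof.
move=> mB; pose Bb b := [set y | B (y, b)].
have mBb b : measurable (Bb b).
  by apply: measurableT_preimage => //; exact: measurable_fun_pair.
transitivity (nu1 (Bb true) + nu0 (Bb false) +
              (tie_share1 (Bb true) + tie_share0 (Bb false))).
  by rewrite couplingE.
rewrite (Yslice_split mB) /tie_share1 /tie_share0 !mdiffE// addeACA.
by rewrite [nu1 _ + _]addeC [nu0 _ + _]addeC !subeK ?fin_num_measure.
Qed.

Definition wrong_sector : set ((R * R) * bool) :=
  [set t | if t.2 then (t.1.2 < t.1.1)%R else (t.1.1 < t.1.2)%R].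

Lemma measurable_wrong_sector : measurable wrong_sector.
Proof.
apply: measurableT_preimage (measurable_fun_ifT _ _ _) _ => //.
- by apply: measurable_fun_ltr; apply: measurableT_comp.
- by apply: measurable_fun_ltr; apply: measurableT_comp.
Qed.

Lemma coupling_wrong_sector : coupling wrong_sector = 0.
Proof.
rewrite couplingE.
have diag_label_wrong b : diag_label b @^-1` wrong_sector = set0.
  by apply/seteqP; split=> // y; rewrite /wrong_sector /=; case: b; rewrite ltxx.
have -> : label true @^-1` wrong_sector `&` sector1 = set0.
  by apply/seteqP; split=> // p [/lt_trans/[apply]]; rewrite ltxx.
have -> : label false @^-1` wrong_sector `&` sector0 = set0.
  by apply/seteqP; split=> // p [/lt_trans/[apply]]; rewrite ltxx.
by rewrite !diag_label_wrong /tie_share1 /tie_share0 !measure0 !adde0.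
Qed.

Lemma coupling_roy_selection :
  {ae coupling, forall t, roy_selection t.1.1 t.1.2 t.2}.
Proof.
exists wrong_sector; split=> [|//|]; first exact: measurable_wrong_sector.
  exact: coupling_wrong_sector.
move=> [[y0 y1] b] /= not_sel; rewrite /wrong_sector /=.
by case: b not_sel => not_sel; rewrite ltNge;
  apply/negP => le; apply/not_sel/roy_selectionP.
Qed.

Lemma roy_coupling_of_bounds : roy_coupling PYD nu.
Proof.
exists _, _, coupling, (fun t => if t.2 then t.1.2 else t.1.1), snd,
  (fun t => t.1.1), (fun t => t.1.2); split.
- split; apply: measurable_fun_pair => //; try exact: measurableT_comp.
  by apply: measurable_fun_ifT => //; exact: measurableT_comp.
- exact: coupling_YD.
- exact: coupling_Y01.
- by [].
- exact: coupling_roy_selection.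
Qed.
End coupling_of_bounds.

Section bounds_of_coupling.
Variables (R : realType) (PYD : probability (R * bool)%type R)
  (nu : probability (R * R)%type R).
Variables (d : measure_display) (T : measurableType d) (P : probability T R)
  (Yt : T -> R) (Dt : T -> bool) (Y0 Y1 : T -> R).
Local Notation YD := (fun t => (Yt t, Dt t)).
Local Notation Y01 := (fun t => (Y0 t, Y1 t)).
Hypotheses (mYD : measurable_fun setT YD) (mY01 : measurable_fun setT Y01).
Hypothesis lawYD : forall B, measurable B -> P (YD @^-1` B) = PYD B.
Hypothesis law01 : forall B, measurable B -> P (Y01 @^-1` B) = nu B.
Hypothesis Yt_sector : forall t, Yt t = (if Dt t then Y1 t else Y0 t)%R.
Variable N : set T.
Hypotheses (mN : measurable N) (PN0 : P N = 0).
Hypothesis selection_off_N : ~` [set t | roy_selection (Y0 t) (Y1 t) (Dt t)] `<=` N.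

Lemma roy_selection_off_N t : ~ N t -> roy_selection (Y0 t) (Y1 t) (Dt t).
Proof. by move=> Nt; apply: contrapT => /selection_off_N. Qed.

Lemma coupling_lower_bound A B0 B1 : measurable A ->
  measurable B0 -> measurable B1 ->
  B0 `<=` YD_event (L0 A) false -> B1 `<=` YD_event (L1 A) true ->
  PYD B0 + PYD B1 <= nu A.
Proof.
move=> mA mB0 mB1 B0L B1L; have mB01 : measurable (B0 `|` B1) by exact: measurableU.
have -> : PYD B0 + PYD B1 = P (YD @^-1` (B0 `|` B1)).
  rewrite -measureU// ?lawYD//.
  by apply/seteqP; split=> // p [/B0L [_ p0] /B1L [_]]; rewrite p0.
have -> : nu A = P (Y01 @^-1` A) by rewrite law01.
apply: (le_measure_nullU _ _ mN PN0); try exact: measurableT_preimage.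
move=> t YDt; have [Nt|Nt] := pselect (N t); [by right|left].
apply: (roy_selection_L (roy_selection_off_N Nt)); rewrite -Yt_sector.
by case: YDt => [/B0L|/B1L]; [left|right].
Qed.

Lemma coupling_upper_bound A C0 C1 : measurable A ->
  measurable C0 -> measurable C1 ->
  YD_event (U0 A) false `<=` C0 -> YD_event (U1 A) true `<=` C1 ->
  nu A <= PYD C0 + PYD C1.
Proof.
move=> mA mC0 mC1 UC0 UC1; have mC01 : measurable (C0 `|` C1) by exact: measurableU.
apply: (@le_trans _ _ (P (YD @^-1` (C0 `|` C1)))); last first.
  by rewrite lawYD//; exact: measureU2.
have -> : nu A = P (Y01 @^-1` A) by rewrite law01.
apply: (le_measure_nullU _ _ mN PN0); try exact: measurableT_preimage.
move=> t At; have [Nt|Nt] := pselect (N t); [by right|left].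
have := roy_selection_U (roy_selection_off_N Nt) At; rewrite -Yt_sector.
by case=> [/UC0|/UC1]; [left|right].
Qed.
End bounds_of_coupling.

Lemma roy_bounds_of_coupling (R : realType) (PYD : probability (R * bool)%type R)
    (nu : probability (R * R)%type R) :
  roy_coupling PYD nu -> roy_bounds PYD nu.
Proof.
move=> [d [T [P [Yt [Dt [Y0 [Y1 [[mYD mY01] lawYD law01 Yt_sector]]]]]]]].
move=> [N [mN PN0 selN]] A mA; split.
- apply: inner_measD_le => B0 B1 mB0 mB1.
  exact: (coupling_lower_bound mYD mY01 lawYD law01 Yt_sector mN PN0 selN).
- apply: outer_measD_ge => C0 C1 mC0 mC1.
  exact: (coupling_upper_bound mYD mY01 lawYD law01 Yt_sector mN PN0 selN).
Qed.

Theorem theorem3 (R : realType) (PYD : probability (R * bool)%type R)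
    (nu : probability (R * R)%type R) :
  (forall A : set (R * R), measurable A ->
     inner_meas PYD (YD_event (L0 A) false) + inner_meas PYD (YD_event (L1 A) true)
       <= nu A /\
     nu A <= outer_meas PYD (YD_event (U0 A) false) + outer_meas PYD (YD_event (U1 A) true))
  <->
  exists (d : measure_display) (T : measurableType d) (P : probability T R)
         (Yt : T -> R) (Dt : T -> bool) (Y0 Y1 : T -> R),
    [/\ measurable_fun setT (fun t => (Yt t, Dt t)) /\
        measurable_fun setT (fun t => (Y0 t, Y1 t)),
        (forall B : set (R * bool), measurable B ->
           P ((fun t => (Yt t, Dt t)) @^-1` B) = PYD B),
        (forall B : set (R * R), measurable B ->
           P ((fun t => (Y0 t, Y1 t)) @^-1` B) = nu B),
        (forall t, Yt t = (if Dt t then Y1 t else Y0 t)%R) &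
        {ae P, forall t, ((Y0 t < Y1 t)%R -> Dt t = true) /\
                         ((Y1 t < Y0 t)%R -> Dt t = false)}].
Proof.
split; [exact: roy_coupling_of_bounds | exact: roy_bounds_of_coupling].
Qed.
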